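(* Let $N\ge1$, $W\in\mathbb{R}^{N\times N}$, and let $h(s)$ be a node filter transfer function with $h(0)>0$ such that $h(s)$ decreases asymptotically as $1/s^g$ for some $g>0$ (i.e. $s^g h(s)\to1$ as $s\to+\infty$), and let $\tau=h(0)^{1/g}$ be its time constant. Let $G(s)=e^{\mathrm T}(I-h(s)W)^{-1}e\,h(s)$ with $e=\frac{1}{\sqrt N}(1,\dots,1)^{\mathrm T}$ be the network transfer function, and let $\kappa_n$ be the chain motif cumulants of $W$; assume the connection strength is small enough that $G(s)=\big(1-\sum_{n\ge1}N^n\kappa_n h(s)^n\big)^{-1}h(s)$ holds with convergent series for all real $s\ge0$. Then the time constant of $G$ equals $\big(f(\tau^g)\big)^{1/g}$, where $$f(z)=\frac{z}{1-N\kappa_1 z-N^2\kappa_2 z^2-\cdots}=\frac{z}{1-\sum_{n\ge1}N^n\kappa_n z^n}.$$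
   Context: Chain motif moments: $\mu_n=\frac{1}{N^{n+1}}\sum_{i,j}(W^n)_{ij}$ for $n\ge1$. Chain motif cumulants $\kappa_n$ are defined recursively by $\mu_n=\sum\kappa_{n_1}\cdots\kappa_{n_t}$, summing over all compositions $(n_1,\dots,n_t)$ of $n$ into positive integers. Time constant (''frequency-cutoff'' time constant): for a filter $F$ with $F(0)>0$ whose transfer function decays like $1/s^g$ at high frequency ($s^gF(s)\to1$), the cutoff frequency $\omega_c$ is where the low-frequency gain $F(0)$ meets the high-frequency asymptote $1/\omega^g$, i.e. $\omega_c=F(0)^{-1/g}$, and the time constant is $1/\omega_c=F(0)^{1/g}$. *)

From HB Require Import structures.
From mathcomp Require Import all_boot all_order all_algebra.
From mathcomp Require Import all_classical all_reals all_analysis.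
Set Implicit Arguments. Unset Strict Implicit. Unset Printing Implicit Defensive.
Import Order.TTheory GRing.Theory Num.Theory.
Import numFieldNormedType.Exports.
Local Open Scope classical_set_scope.
Local Open Scope ring_scope.

(* Compositions of n: sequences of positive integers summing to n.
   [comps_rec fuel n] uses fuel >= n (each step decreases n by >= 1). *)
Fixpoint comps_rec (fuel n : nat) : seq (seq nat) :=
  match fuel with
  | 0 => if n == 0%N then [:: [::]] else [::]
  | fuel'.+1 =>
      if n == 0%N then [:: [::]]
      else flatten [seq [seq k :: c | c <- comps_rec fuel' (n - k)] | k <- iota 1 n]
  end.
Definition compositions (n : nat) : seq (seq nat) := comps_rec n n.

Definition chain_moment (R : realType) (N : nat) (W : 'M[R]_N) (n : nat) : R :=
  (N%:R ^+ n.+1)^-1 * \sum_(i < N) \sum_(j < N) (W ^+ n) i j.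

Definition is_chain_cumulants (R : realType) (N : nat) (W : 'M[R]_N)
  (kappa : nat -> R) : Prop :=
  forall n : nat, (1 <= n)%N ->
    chain_moment W n = \sum_(c <- compositions n) \prod_(k <- c) kappa k.

Definition evec (R : realType) (N : nat) : 'cV[R]_N :=
  const_mx (Num.sqrt (N%:R))^-1.

Definition net_transfer (R : realType) (N : nat) (W : 'M[R]_N) (h : R -> R)
  (s : R) : R :=
  ((evec R N)^T *m invmx (1%:M - h s *: W) *m evec R N) ord0 ord0 * h s.

Definition cum_coef (R : realType) (N : nat) (kappa : nat -> R) (n : nat) : R :=
  if n is 0 then 0 else N%:R ^+ n * kappa n.

Definition cum_partial (R : realType) (N : nat) (kappa : nat -> R) (z : R) :=
  series (fun n => cum_coef N kappa n * z ^+ n).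

Definition cum_series (R : realType) (N : nat) (kappa : nat -> R) (z : R) : R :=
  lim (cum_partial N kappa z @ \oo).

Definition f_fun (R : realType) (N : nat) (kappa : nat -> R) (z : R) : R :=
  z / (1 - cum_series N kappa z).

Definition decays_like (R : realType) (g : R) (F : R -> R) : Prop :=
  (fun s => s `^ g * F s) @ +oo --> (1 : R).

Definition time_constant (R : realType) (g : R) (F : R -> R) : R :=
  F 0 `^ g^-1.

From HB Require Import structures.
From mathcomp Require Import all_boot all_order all_algebra.
From mathcomp Require Import all_classical all_reals all_analysis.
From mathcomp Require Import ring.
Import Order.TTheory GRing.Theory Num.Theory.
Import numFieldNormedType.Exports.
Local Open Scope classical_set_scope.
Local Open Scope ring_scope.

(* The time constant is a computation: G(0) = h(0) / (1 - S(h(0))) = f(h(0)) and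
   h(0) = tau^g, where S(z) = sum_{n>=1} N^n kappa_n z^n.  The real content is that G
   inherits the high-frequency decay of h.  Since S converges at z = h(0) > 0, its
   coefficients satisfy |N^n kappa_n| h(0)^n <= M, so for |z| <= h(0)/2 the series is
   dominated by a geometric series of ratio 1/2 and |S(z)| <= 4 M |z| / h(0).  As
   s^g h(s) -> 1 forces h(s) -> 0, we get S(h(s)) -> 0, and s^g G(s) =
   s^g h(s) / (1 - S(h(s))) -> 1. *)

Section power_series_near_zero.
Variables (R : realType) (c : nat -> R) (r M : R).
Hypotheses (r_gt0 : 0 < r) (c0 : c 0 = 0) (cM : forall n, `|c n * r ^+ n| <= M).

Let M_ge0 : 0 <= M := le_trans (normr_ge0 _) (cM 0).

Lemma norm_power_term_le z n : `|z| <= r / 2 ->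
  `|c n * z ^+ n| <= geometric (2 * M / r * `|z|) 2^-1 n.
Proof.
move=> zr; have q_ge0 : 0 <= `|z| / r by rewrite divr_ge0 // ltW.
have q_le : `|z| / r <= 2^-1 by rewrite ler_pdivrMr // mulrC.
case: n => [|n] /=.
  by rewrite c0 mul0r normr0 mulr_ge0 ?exprn_ge0 // !mulr_ge0 ?invr_ge0 // ltW.
have -> : `|c n.+1 * z ^+ n.+1| = `|c n.+1 * r ^+ n.+1| * (`|z| / r) ^+ n.+1.
  by rewrite !normrM !normrX (gtr0_norm r_gt0) exprMn exprVn; field; rewrite expf_neq0 // gt_eqF.
apply: le_trans (ler_pM (normr_ge0 _) (exprn_ge0 _ q_ge0) (cM _) (lexx _)) _.
rewrite exprS [X in _ <= X](_ : _ = M * (`|z| / r) * 2^-1 ^+ n); last first.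
  by rewrite exprS; field; rewrite gt_eqF.
rewrite -mulrA ler_wpM2l // ler_wpM2l //.
by rewrite lerXn2r // nnegrE invr_ge0.
Qed.

Lemma norm_power_series_le z : `|z| <= r / 2 ->
  forall k, `|series (fun n => c n * z ^+ n) k| <= 4 * M / r * `|z|.
Proof.
move=> zr k; set a := 2 * M / r * `|z|.
have a_ge0 : 0 <= a by rewrite !mulr_ge0 ?invr_ge0 // ltW.
rewrite [X in _ <= X](_ : _ = a * (1 - 2^-1)^-1); last first.
  by rewrite /a; field; rewrite gt_eqF.
rewrite /series /=.
apply: le_trans (ler_norm_sum _ _ _) _.
apply: le_trans (_ : _ <= series (geometric a 2^-1) k) _.
  by apply: ler_sum => n _; exact: norm_power_term_le.
by apply: geometric_le_lim; rewrite ?gtr0_norm ?invr_gt0 ?invf_lt1 ?ltr1n.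
Qed.

Lemma norm_lim_power_series_le z : `|z| <= r / 2 ->
  cvgn (series (fun n => c n * z ^+ n)) ->
  `|limn (series (fun n => c n * z ^+ n))| <= 4 * M / r * `|z|.
Proof.
move=> zr cvg_z; rewrite ler_norml; apply/andP; split.
- apply: limr_ge => //; near=> k.
  by have := norm_power_series_le _ zr k; rewrite ler_norml => /andP[].
- apply: limr_le => //; near=> k.
  by have := norm_power_series_le _ zr k; rewrite ler_norml => /andP[].
Unshelve. all: by end_near.
Qed.

End power_series_near_zero.

Lemma lim_power_series_cvg0 {R : realType} {T : Type} {F : set_system T}
    {FF : Filter F} (c : nat -> R) (r : R) (u : T -> R) :
  0 < r -> c 0 = 0 -> cvgn (series (fun n => c n * r ^+ n)) ->
  u @ F --> 0 -> (\forall x \near F, cvgn (series (fun n => c n * u x ^+ n))) ->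
  limn (series (fun n => c n * u x ^+ n)) @[x --> F] --> 0.
Proof.
move=> r_gt0 c0 cvg_r u0 cvg_u.
have [M [_ cM]] := cvg_seq_bounded (cvgP _ (cvg_series_cvg_0 cvg_r)).
have {}cM n : `|c n * r ^+ n| <= `|M| + 1.
  by apply: cM => //; rewrite (le_lt_trans (ler_norm M)) ?ltrDl.
pose B x := 4 * (`|M| + 1) / r * `|u x|.
have B0 : B x @[x --> F] --> 0.
  rewrite -(mulr0 (4 * (`|M| + 1) / r)) -(@normr0 _ R); apply: cvgMr; exact: cvg_norm.
apply: (@squeeze_cvgr _ _ _ _ (fun x => - B x) B).
- near=> x; rewrite -ler_norml; apply: norm_lim_power_series_le => //.
    near: x; exact: (@cvgr0_norm_le _ R^o _ _ _ u u0 _ (divr_gt0 r_gt0 _)).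
  by near: x.
- by rewrite -oppr0; apply: cvgN.
- exact: B0.
Unshelve. all: by end_near.
Qed.

Lemma powRVK {R : realType} (x g : R) : 0 <= x -> g != 0 -> (x `^ g^-1) `^ g = x.
Proof. by move=> x_ge0 g_neq0; rewrite -powRrM mulVf // powRr1. Qed.

Lemma powR_cvgy {R : realType} (g : R) : 0 < g -> s `^ g @[s --> +oo] --> +oo.
Proof.
move=> g_gt0; apply/cvgryPge => A; near=> s.
have sA : `|A| `^ g^-1 <= s by near: s; apply: nbhs_pinfty_ge.
rewrite (le_trans (ler_norm A)) // -{1}(powRVK _ _ (normr_ge0 A) (lt0r_neq0 g_gt0)).
by apply: ge0_ler_powR; rewrite ?nnegrE ?(ltW g_gt0) // (le_trans _ sA) // powR_ge0.
Unshelve. all: by end_near.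
Qed.

Lemma decays_like_cvg0 {R : realType} (g : R) (F : R -> R) :
  0 < g -> decays_like g F -> F @ +oo --> 0.
Proof.
move=> g_gt0 F_decays.
have powV0 : (s `^ g)^-1 @[s --> +oo] --> 0.
  apply/gtr0_cvgV0; last exact: powR_cvgy.
  by near=> s; apply: powR_gt0; near: s; exact: (nbhs_pinfty_gt (num_real 0)).
have F_eq : {near +oo, (fun s => s `^ g * F s * (s `^ g)^-1) =1 F}.
  near=> s; have s_gt0 : 0 < s by near: s; exact: (nbhs_pinfty_gt (num_real 0)).
  by rewrite /= mulrC mulKf // gt_eqF // powR_gt0.
apply: cvg_trans (near_eq_cvg F_eq) _.
by rewrite -(mulr0 1); apply: cvgM.
Unshelve. all: by end_near.
Qed.

Lemma decays_like_near_mul {R : realType} (g : R) (F G a : R -> R) :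
  decays_like g F -> a @ +oo --> (1 : R) ->
  (\forall s \near +oo, G s = a s * F s) -> decays_like g G.
Proof.
move=> F_decays a1 G_eq.
have G_near : {near +oo, (fun s => s `^ g * F s * a s) =1 (fun s => s `^ g * G s)}.
  by near=> s; rewrite /= (near G_eq s) // mulrCA mulrC.
apply: cvg_trans (near_eq_cvg G_near) _.
by rewrite -(mulr1 1); apply: cvgM.
Unshelve. all: by end_near.
Qed.

Theorem theorem2 (R : realType) (N : nat) (W : 'M[R]_N) (h : R -> R) (g : R)
  (kappa : nat -> R) :
  (0 < N)%N ->
  0 < h 0 ->
  0 < g ->
  decays_like g h ->
  is_chain_cumulants W kappa ->
  (forall s : R, 0 <= s -> (1%:M - h s *: W) \in unitmx) ->
  (forall s : R, 0 <= s -> cvg (cum_partial N kappa (h s) @ \oo)) ->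
  (forall s : R, 0 <= s ->
     net_transfer W h s = (1 - cum_series N kappa (h s))^-1 * h s) ->
  let tau := time_constant g h in
  decays_like g (net_transfer W h) /\
  time_constant g (net_transfer W h) = f_fun N kappa (tau `^ g) `^ g^-1.
Proof.
move=> _ h0_gt0 g_gt0 h_decays _ _ cvg_S G_eq tau; split; last first.
  rewrite /time_constant G_eq // /f_fun /tau /time_constant.
  by rewrite powRVK ?(ltW h0_gt0) ?lt0r_neq0 // mulrC.
have S0 : cum_series N kappa (h s) @[s --> +oo] --> 0.
  apply: (lim_power_series_cvg0 _ _ _ h0_gt0) => //; first exact: cvg_S.
    exact: decays_like_cvg0 h_decays.
  by near=> s; apply: cvg_S; near: s; exact: (nbhs_pinfty_ge (num_real 0)).
apply: (@decays_like_near_mul _ _ _ _ (fun s => (1 - cum_series N kappa (h s))^-1) h_decays).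
  suff : (1 - cum_series N kappa (h s))^-1 @[s --> +oo] --> (1 - 0 : R)^-1.
    by rewrite subr0 invr1.
  by apply: cvgV; [rewrite subr0 oner_neq0 | apply: cvgB => //; exact: cvg_cst].
by near=> s; apply: G_eq; near: s; exact: (nbhs_pinfty_ge (num_real 0)).
Unshelve. all: by end_near.
Qed.
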